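(* The operator $T_2\,\omega_r^{1/2}$, defined on the subspace $D_0$, is bounded.
   Context: Let $\mathcal{K}=L^2(\mathbb{R}^3,d^3k)$, $\omega(\vec k)=|\vec k|$. Let $\Gamma$ be the antiunitary involution $(\Gamma v)(\vec k)=\overline{v(-\vec k)}$. For $\epsilon>0$ let $P_\epsilon$ be the orthogonal projection onto $\{v\in\mathcal{K}: v(\vec k)=0\text{ for }|\vec k|<\epsilon\}$, and $D_0=\bigcup_{\epsilon>0}P_\epsilon\mathcal{K}$. Fix a strictly decreasing sequence $(\epsilon_i)_{i\in\mathbb{N}}$ of positive numbers with $\epsilon_i\to0$; put $P_i=P_{\epsilon_{i+1}}-P_{\epsilon_i}$ for $i\in\mathbb{N}$ and $P_0=P_{\epsilon_1}$. Fix finite-rank orthogonal projections $Q_i$ ($i\in\mathbb{N}$) with $Q_i\Gamma=\Gamma Q_i$ and $Q_iP_i=Q_i$, and numbers $b_i\in(0,1)$ with $b_i\to0$ and $\sum_i\frac{\epsilon_i}{b_i^2}\mathrm{rk}\,Q_i<\infty$. On $D_0$ define $T_2=\mathbf{1}+\sum_i(\frac{1}{b_i}-1)Q_i$ (only finitely many terms act nontrivially on any vector of $D_0$). Let $\omega_r=\omega(\mathbf{1}-P_0)+\epsilon_1P_0$; note $\omega_r^{1/2}D_0=D_0$. *)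

From mathcomp Require Import all_boot all_order all_algebra.
From mathcomp Require Import all_classical all_reals all_analysis.
Set Implicit Arguments.
Unset Strict Implicit.
Unset Printing Implicit Defensive.
Import Order.TTheory GRing.Theory Num.Theory.
Local Open Scope ring_scope.
Local Open Scope classical_set_scope.

Section Defs.
Variable R : realType.

Definition mu3 := (((@lebesgue_measure R) \x (@lebesgue_measure R))
                     \x (@lebesgue_measure R))%E.

(* Complex numbers are represented as pairs (real part, imaginary part). *)
Definition cpx := (R * R)%type.
Definition cmul (z w : cpx) : cpx := (z.1 * w.1 - z.2 * w.2, z.1 * w.2 + z.2 * w.1).
Definition cscale (r : R) (z : cpx) : cpx := (r * z.1, r * z.2).
Definition cmodsq (z : cpx) : R := z.1 ^+ 2 + z.2 ^+ 2.

(* complex-valued functions on R^3 (representatives of elements of K) *)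
Definition vec := (R * R * R)%type -> cpx.

Definition absk (k : R * R * R) : R := Num.sqrt (k.1.1 ^+ 2 + k.1.2 ^+ 2 + k.2 ^+ 2).

Definition sq_int (v : vec) : Prop :=
  [/\ measurable_fun setT (fun k => (v k).1),
      measurable_fun setT (fun k => (v k).2) &
      (\int[mu3]_k (cmodsq (v k))%:E < +oo)%E].

Definition normsq (v : vec) : \bar R := (\int[mu3]_k (cmodsq (v k))%:E)%E.

(* inner product <u, v> = \int conj(u) v, antilinear in the first slot *)
Definition inner (u v : vec) : cpx :=
  (Rintegral mu3 setT (fun k => (u k).1 * (v k).1 + (u k).2 * (v k).2),
   Rintegral mu3 setT (fun k => (u k).1 * (v k).2 - (u k).2 * (v k).1)).

Definition ae_eqv (u v : vec) : Prop := {ae mu3, forall k, u k = v k}.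

Definition Gamma (v : vec) : vec := fun k =>
  let w := v ((- k.1.1, - k.1.2), - k.2) in (w.1, - w.2).

(* P_eps: orthogonal projection onto {v | v(k) = 0 for |k| < eps},
   i.e. multiplication by the indicator of {|k| >= eps} *)
Definition Peps (eps : R) (v : vec) : vec := fun k =>
  if absk k < eps then (0, 0) else v k.

Definition Pshell (eps : nat -> R) (i : nat) (v : vec) : vec := fun k =>
  ((Peps (eps i.+1) v k).1 - (Peps (eps i) v k).1,
   (Peps (eps i.+1) v k).2 - (Peps (eps i) v k).2).

(* D_0 = union over eps > 0 of P_eps K *)
Definition D0 (v : vec) : Prop :=
  sq_int v /\ exists eps : R, 0 < eps /\ {ae mu3, forall k, absk k < eps -> v k = (0, 0)}.

Definition orthonormal_fam (n : nat) (e : 'I_n -> vec) : Prop :=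
  (forall j, sq_int (e j)) /\
  (forall j l, inner (e j) (e l) = ((j == l)%:R, 0)).

(* the finite-rank orthogonal projection onto span(e_0, ..., e_(n-1)):
   Q v = \sum_j <e_j, v> e_j ; its rank is n when e is orthonormal *)
Definition fin_proj (n : nat) (e : 'I_n -> vec) (v : vec) : vec := fun k =>
  (\sum_(j < n) (cmul (inner (e j) v) (e j k)).1,
   \sum_(j < n) (cmul (inner (e j) v) (e j k)).2).

(* omega_r = omega (1 - P_0) + eps_1 P_0 with P_0 = P_{eps_1}, as a
   multiplication operator by the function wr *)
Definition wr (eps1 : R) (k : R * R * R) : R :=
  let ind := if absk k < eps1 then 0 else 1 in
  absk k * (1 - ind) + eps1 * ind.

Definition sqrt_wr (eps1 : R) (v : vec) : vec := fun k =>
  cscale (Num.sqrt (wr eps1 k)) (v k).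

(* partial sums of T_2 = 1 + \sum_(i >= 1) (1/b_i - 1) Q_i, with Q_i the
   projection onto the span of e i *)
Definition T2N (b : nat -> R) (n : nat -> nat) (e : forall i, 'I_(n i) -> vec)
  (N : nat) (w : vec) : vec := fun k =>
  ((w k).1 + \sum_(1 <= i < N.+1) (cscale ((b i)^-1 - 1) (fin_proj (e i) w k)).1,
   (w k).2 + \sum_(1 <= i < N.+1) (cscale ((b i)^-1 - 1) (fin_proj (e i) w k)).2).

End Defs.

(* Write w = omega_r^(1/2) v and lambda_i = eps_i rk Q_i / b_i^2.  Pointwise in k, a
   weighted Cauchy-Schwarz inequality gives
     |T_2 w|^2 <= (1 + sum_i lambda_i) (|w|^2 + sum_i |Q_i w|^2 / eps_i),
   because (1/b_i - 1)^2 <= rk Q_i / b_i^2 whenever Q_i <> 0.  After integration,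
   Q_i = Q_i P_i and Bessel's inequality give ||Q_i w||^2 <= ||P_i w||^2 <= eps_i ||P_i v||^2,
   since omega_r <= eps_i on the i-th shell.  The shells are disjoint, so
   sum_i ||P_i v||^2 <= ||v||^2, while ||w||^2 <= eps_1 ||v||^2.  Hence
   ||T_2 w||^2 <= (1 + sum_i lambda_i) (eps_1 + 1) ||v||^2 uniformly in the truncation. *)

From mathcomp Require Import all_boot all_order all_algebra.
From mathcomp Require Import all_classical all_reals all_analysis.
From mathcomp Require Import measurable_realfun ring lra.
Set Implicit Arguments.
Unset Strict Implicit.
Unset Printing Implicit Defensive.
Import Order.TTheory GRing.Theory Num.Theory.
Local Open Scope ring_scope.
Local Open Scope classical_set_scope.

Section SquareIntegrable.
Variable R : realType.
Local Notation vec := (vec R).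
Local Notation mu := (@mu3 R).
Implicit Types (x y u : vec).

Definition measurable_vec x :=
  measurable_fun setT (fun k => (x k).1) /\ measurable_fun setT (fun k => (x k).2).

Lemma sq_int_measurable x : sq_int x -> measurable_vec x.
Proof. by case. Qed.

Lemma cmodsq_ge0 (z : cpx R) : 0 <= cmodsq z.
Proof. by rewrite /cmodsq addr_ge0 // sqr_ge0. Qed.

Lemma measurable_cmodsq x : measurable_vec x -> measurable_fun setT (fun k => cmodsq (x k)).
Proof. by case=> m1 m2; apply: measurable_funD; exact: measurable_funX. Qed.

Lemma normsq_ge0 x : (0 <= normsq x)%E.
Proof. by apply: integral_ge0 => k _; rewrite lee_fin cmodsq_ge0. Qed.

Lemma measurable_sum_cmodsq (I : eqType) (s : seq I) (c : I -> R) (u : I -> vec) :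
  {in s, forall i, sq_int (u i)} ->
  measurable_fun setT (fun k => \sum_(i <- s) c i * cmodsq (u i k)).
Proof.
elim: s => [|j s IH] su; first by under eq_fun do rewrite big_nil; exact: measurable_cst.
under eq_fun do rewrite big_cons; apply: measurable_funD; last first.
  by apply: IH => i si; apply: su; rewrite inE si orbT.
apply: measurable_funM; first exact: measurable_cst.
exact: measurable_cmodsq (sq_int_measurable (su j (mem_head j s))).
Qed.

Lemma integral_sum_cmodsq (I : eqType) (s : seq I) (c : I -> R) (u : I -> vec) :
  {in s, forall i, 0 <= c i} -> {in s, forall i, sq_int (u i)} ->
  (\int[mu]_k (\sum_(i <- s) c i * cmodsq (u i k))%:E =
   \sum_(i <- s) (c i)%:E * normsq (u i))%E.
Proof.
elim: s => [|j s IH] c0 su.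
  by under eq_integral do rewrite big_nil; rewrite integral0 big_nil.
have c0s : {in s, forall i, 0 <= c i} by move=> i si; apply: c0; rewrite inE si orbT.
have sus : {in s, forall i, sq_int (u i)} by move=> i si; apply: su; rewrite inE si orbT.
have c0j := c0 j (mem_head j s).
have suj := su j (mem_head j s).
have mj : measurable_fun setT (fun k => (cmodsq (u j k))%:E).
  by apply/measurable_EFinP; exact: measurable_cmodsq (sq_int_measurable suj).
under eq_integral do rewrite big_cons EFinD.
rewrite ge0_integralD //; first last.
- by apply/measurable_EFinP; exact: measurable_sum_cmodsq.
- by move=> k _; rewrite lee_fin big_seq sumr_ge0 // => i si; rewrite mulr_ge0 ?c0s ?cmodsq_ge0.
- by under eq_fun do rewrite EFinM; apply: emeasurable_funM => //; exact: measurable_cst.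
- by move=> k _; rewrite lee_fin mulr_ge0 ?cmodsq_ge0.
under eq_integral do rewrite EFinM.
rewrite ge0_integralZl_EFin //; last by move=> k _; rewrite lee_fin cmodsq_ge0.
by rewrite (IH c0s sus) big_cons.
Qed.

Lemma integral_le_sum_normsq (I : eqType) (s : seq I) (c : I -> R) (u : I -> vec)
    (f : R * R * R -> R) :
  measurable_fun setT f -> (forall k, 0 <= f k) ->
  {in s, forall i, 0 <= c i} -> {in s, forall i, sq_int (u i)} ->
  (forall k, f k <= \sum_(i <- s) c i * cmodsq (u i k)) ->
  (\int[mu]_k (f k)%:E <= \sum_(i <- s) (c i)%:E * normsq (u i))%E.
Proof.
move=> mf f0 c0 su le_f; rewrite -integral_sum_cmodsq //.
apply: (@ge0_le_integral _ _ _ mu) => //.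
- by move=> k _; exact: f0.
- exact/measurable_EFinP.
- by apply/measurable_EFinP; exact: measurable_sum_cmodsq.
- by move=> k _; rewrite lee_fin.
Qed.

Lemma integral_lt_pinfty_le_sum (I : eqType) (s : seq I) (c : I -> R) (u : I -> vec)
    (f : R * R * R -> R) :
  measurable_fun setT f -> (forall k, 0 <= f k) ->
  {in s, forall i, 0 <= c i} -> {in s, forall i, sq_int (u i)} ->
  (forall k, f k <= \sum_(i <- s) c i * cmodsq (u i k)) ->
  (\int[mu]_k (f k)%:E < +oo)%E.
Proof.
move=> mf f0 c0 su le_f; apply: le_lt_trans (integral_le_sum_normsq mf f0 c0 su le_f) _.
rewrite big_seq; apply: lte_sum_pinfty => i si.
by apply: lte_mul_pinfty; rewrite ?lee_fin ?c0 //; case: (su i si).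
Qed.

Lemma sq_int_le_sum (I : eqType) (s : seq I) (c : I -> R) (u : I -> vec) x :
  measurable_vec x -> {in s, forall i, 0 <= c i} -> {in s, forall i, sq_int (u i)} ->
  (forall k, cmodsq (x k) <= \sum_(i <- s) c i * cmodsq (u i k)) -> sq_int x.
Proof.
move=> mx c0 su le_x; have [x1 x2] := mx; split=> //.
exact: integral_lt_pinfty_le_sum (measurable_cmodsq mx) (fun k => cmodsq_ge0 (x k)) c0 su le_x.
Qed.

Lemma sq_int_le_scale (c : R) x y :
  measurable_vec x -> 0 <= c -> sq_int y ->
  (forall k, cmodsq (x k) <= c * cmodsq (y k)) -> sq_int x.
Proof.
move=> mx c0 sy le_x.
by apply: (@sq_int_le_sum _ [:: tt] (fun=> c) (fun=> y)) => // k; rewrite big_seq1.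
Qed.

Definition dot x y k := (x k).1 * (y k).1 + (x k).2 * (y k).2.

Definition ip x y := Rintegral mu setT (dot x y).

Lemma ip_sym x y : ip x y = ip y x.
Proof. by apply: eq_Rintegral => k _; rewrite /dot addrC mulrC [(y k).1 * _]mulrC addrC. Qed.

Lemma ip_self_ge0 x : 0 <= ip x x.
Proof. by apply: Rintegral_ge0 => k _; rewrite /dot -!expr2 addr_ge0 ?sqr_ge0. Qed.

Lemma normsq_ip x : sq_int x -> normsq x = (ip x x)%:E.
Proof.
case=> _ _ fin; have dotE : dot x x = fun k => cmodsq (x k).
  by apply: funext => k; rewrite /dot /cmodsq !expr2.
by rewrite /ip dotE /Rintegral fineK // ge0_fin_numE ?normsq_ge0.
Qed.

Lemma ip_self_le_sum (I : eqType) (s : seq I) (c : I -> R) (u : I -> vec) x :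
  measurable_vec x -> {in s, forall i, 0 <= c i} -> {in s, forall i, sq_int (u i)} ->
  (forall k, cmodsq (x k) <= \sum_(i <- s) c i * cmodsq (u i k)) ->
  ip x x <= \sum_(i <- s) c i * ip (u i) (u i).
Proof.
move=> mx c0 su le_x; rewrite -lee_fin -normsq_ip; last exact: sq_int_le_sum c0 su le_x.
rewrite -sumEFin big_seq (eq_bigr (fun i => (c i)%:E * normsq (u i))%E) -?big_seq.
  exact: integral_le_sum_normsq (measurable_cmodsq mx) (fun k => cmodsq_ge0 (x k)) c0 su le_x.
by move=> i si; rewrite EFinM (normsq_ip (su i si)).
Qed.

Lemma ip_self_le_scale (c : R) x y :
  measurable_vec x -> 0 <= c -> sq_int y ->
  (forall k, cmodsq (x k) <= c * cmodsq (y k)) -> ip x x <= c * ip y y.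
Proof.
move=> mx c0 sy le_x.
have := @ip_self_le_sum _ [:: tt] (fun=> c) (fun=> y) x mx.
by rewrite big_seq1; apply=> // k; rewrite big_seq1.
Qed.

Lemma ip_self_ae x y : sq_int x -> sq_int y -> ae_eqv x y -> ip x x = ip y y.
Proof.
move=> sx sy xy; apply: EFin_inj; rewrite -!normsq_ip //.
apply: ae_eq_integral => //.
- by apply/measurable_EFinP; exact: measurable_cmodsq (sq_int_measurable sx).
- by apply/measurable_EFinP; exact: measurable_cmodsq (sq_int_measurable sy).
by apply: (filterS (Filter := ae_filter_ringOfSetsType mu)) xy => k /= ->.
Qed.

Lemma dot_integrable x y : sq_int x -> sq_int y -> mu.-integrable setT (EFin \o dot x y).
Proof.
move=> sx sy; have [[x1 x2] [y1 y2]] := (sq_int_measurable sx, sq_int_measurable sy).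
have mdot : measurable_fun setT (dot x y).
  by apply: measurable_funD; exact: measurable_funM.
apply/integrableP; split; first exact/measurable_EFinP.
apply: (@integral_lt_pinfty_le_sum _ [:: true; false] (fun=> 1) (fun b => if b then x else y)).
- exact: measurableT_comp mdot.
- by [].
- by [].
- by move=> [] _.
- move=> k; rewrite big_cons big_seq1 !mul1r /dot /cmodsq ler_norml.
  have := sqr_ge0 ((x k).1 - (y k).1); have := sqr_ge0 ((x k).1 + (y k).1).
  have := sqr_ge0 ((x k).2 - (y k).2); have := sqr_ge0 ((x k).2 + (y k).2).
  rewrite !expr2 => *; apply/andP; split; nra.
Qed.

Definition vadd x y : vec := fun k => ((x k).1 + (y k).1, (x k).2 + (y k).2).

Definition vscale (a : R) x : vec := fun k => (a * (x k).1, a * (x k).2).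

Definition vsum (I : Type) (s : seq I) (F : I -> vec) : vec :=
  fun k => (\sum_(i <- s) (F i k).1, \sum_(i <- s) (F i k).2).

Lemma vsum_cons (I : Type) (i : I) (s : seq I) (F : I -> vec) :
  vsum (i :: s) F = vadd (F i) (vsum s F).
Proof. by apply: funext => k; rewrite /vsum /vadd !big_cons. Qed.

Lemma sq_int_add x y : sq_int x -> sq_int y -> sq_int (vadd x y).
Proof.
move=> sx sy; have [[x1 x2] [y1 y2]] := (sq_int_measurable sx, sq_int_measurable sy).
apply: (@sq_int_le_sum _ [:: true; false] (fun=> 2) (fun b => if b then x else y)).
- by split; apply: measurable_funD.
- by [].
- by move=> [] _.
- move=> k; rewrite big_cons big_seq1 /vadd /cmodsq /=.
  have := sqr_ge0 ((x k).1 - (y k).1); have := sqr_ge0 ((x k).2 - (y k).2).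
  rewrite !expr2 => *; nra.
Qed.

Lemma sq_int_scale a x : sq_int x -> sq_int (vscale a x).
Proof.
move=> sx; have [x1 x2] := sq_int_measurable sx.
apply: (@sq_int_le_scale (a ^+ 2) _ x) => //; last 2 first.
- exact: sqr_ge0.
- by move=> k; rewrite /vscale /cmodsq /= !exprMn mulrDr.
by split; apply: measurable_funM => //; exact: measurable_cst.
Qed.

Lemma sq_int_sum (I : eqType) (s : seq I) (F : I -> vec) :
  {in s, forall i, sq_int (F i)} -> sq_int (vsum s F).
Proof.
elim: s => [|i s IH] sF.
  apply: (@sq_int_le_sum _ [::] (fun=> 0) F) => // [|k].
    by split; rewrite /vsum /=; under eq_fun do rewrite big_nil; exact: measurable_cst.
  by rewrite /vsum /cmodsq !big_nil expr2 mul0r addr0.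
rewrite vsum_cons; apply: sq_int_add; first by apply: sF; exact: mem_head.
by apply: IH => j sj; apply: sF; rewrite inE sj orbT.
Qed.

Lemma ip_addl x z y : sq_int x -> sq_int z -> sq_int y ->
  ip (vadd x z) y = ip x y + ip z y.
Proof.
move=> sx sz sy; rewrite /ip -RintegralD ?dot_integrable //.
by apply: eq_Rintegral => k _; rewrite /dot /vadd /=; ring.
Qed.

Lemma ip_scalel a x y : sq_int x -> sq_int y -> ip (vscale a x) y = a * ip x y.
Proof.
move=> sx sy; rewrite /ip -RintegralZl ?dot_integrable //.
by apply: eq_Rintegral => k _; rewrite /dot /vscale /=; ring.
Qed.

Lemma ip_suml (I : eqType) (s : seq I) (F : I -> vec) y :
  {in s, forall i, sq_int (F i)} -> sq_int y ->
  ip (vsum s F) y = \sum_(i <- s) ip (F i) y.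
Proof.
elim: s => [|i s IH] sF sy.
  rewrite big_nil /ip -[RHS](mul0r (fine (mu setT))) -Rintegral_cst //.
  by apply: eq_Rintegral => k _; rewrite /dot /vsum !big_nil !mul0r addr0.
have sFs : {in s, forall j, sq_int (F j)} by move=> j sj; apply: sF; rewrite inE sj orbT.
have sFi : sq_int (F i) by apply: sF; exact: mem_head.
by rewrite vsum_cons big_cons ip_addl ?(IH sFs sy) //; exact: sq_int_sum.
Qed.

Definition orth_proj (J : finType) (f : J -> vec) u : vec :=
  vsum (index_enum J) (fun j => vscale (ip (f j) u) (f j)).

Lemma ip_orth_proj_le (J : finType) (f : J -> vec) u :
  (forall j, sq_int (f j)) -> (forall j l, ip (f j) (f l) = (j == l)%:R) -> sq_int u ->
  ip (orth_proj f u) (orth_proj f u) <= ip u u.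
Proof.
move=> sf onf su; set S := orth_proj f u.
have sterm j : sq_int (vscale (ip (f j) u) (f j)) by exact: sq_int_scale.
have sS : sq_int S by apply: sq_int_sum => j _.
have ipS y : sq_int y -> ip S y = \sum_j ip (f j) u * ip (f j) y.
  by move=> sy; rewrite ip_suml //; apply: eq_bigr => j _; rewrite ip_scalel.
have ipfS l : ip (f l) S = ip (f l) u.
  rewrite ip_sym ipS // (bigD1 l) //= onf eqxx mulr1 big1 ?addr0 // => j /negbTE jl.
  by rewrite onf jl mulr0.
have ipSS : ip S S = ip S u by rewrite !ipS //; apply: eq_bigr => j _; rewrite ipfS.
pose r := vadd u (vscale (-1) S).
have sNS : sq_int (vscale (-1) S) by exact: sq_int_scale.
have sr : sq_int r by exact: sq_int_add.
have := ip_self_ge0 r; rewrite {1}/r ip_addl // ip_scalel // (ip_sym u) (ip_sym S) /r.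
rewrite !ip_addl // !ip_scalel // (ip_sym u S); lra.
Qed.

Definition vmulI x : vec := fun k => (- (x k).2, (x k).1).

Lemma sq_int_vmulI x : sq_int x -> sq_int (vmulI x).
Proof.
move=> sx; have [x1 x2] := sq_int_measurable sx.
apply: (@sq_int_le_scale 1 _ x) => //; first by split=> //; exact: measurable_funN.
by move=> k; rewrite mul1r /vmulI /cmodsq /= sqrrN addrC.
Qed.

Lemma inner_ip x y : inner x y = (ip x y, ip (vmulI x) y).
Proof.
by congr pair; apply: eq_Rintegral => k _; rewrite /dot /vmulI /=; ring.
Qed.

Lemma ip_vmulI x y : ip (vmulI x) (vmulI y) = ip x y.
Proof. by apply: eq_Rintegral => k _; rewrite /dot /vmulI /=; ring. Qed.

(* For the real inner product [ip], the [e j] and [i e j] form an orthonormal family,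
   and [fin_proj e] is the orthogonal projection onto its span. *)
Definition realify n (e : 'I_n -> vec) (p : 'I_n * bool) : vec :=
  if p.2 then vmulI (e p.1) else e p.1.

Lemma orthonormal_realify n (e : 'I_n -> vec) : orthonormal_fam e ->
  (forall p, sq_int (realify e p)) /\
  (forall p q, ip (realify e p) (realify e q) = (p == q)%:R).
Proof.
case=> se one; split=> [[j []]|[j b] [l c]]; rewrite /realify /=.
- exact/sq_int_vmulI/se.
- exact: se.
have [ee ie] : ip (e j) (e l) = (j == l)%:R /\ forall j l, ip (vmulI (e j)) (e l) = 0.
  by split=> [|j' l']; [have := one j l | have := one j' l']; rewrite inner_ip => -[].
case: b c => -[]; rewrite /= ?xpair_eqE /= ?andbT ?andbF.
- by rewrite ip_vmulI.
- exact: ie.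
- by rewrite ip_sym ie.
- exact: ee.
Qed.

Lemma fin_proj_realify n (e : 'I_n -> vec) u : fin_proj e u = orth_proj (realify e) u.
Proof.
have sum_pair (F : 'I_n * bool -> R) : \sum_p F p = \sum_j \sum_b F (j, b).
  by rewrite pair_bigA; apply: eq_bigr => -[].
apply: funext => k; rewrite /fin_proj /orth_proj /vsum !sum_pair.
by congr pair; apply: eq_bigr => j _; rewrite big_bool inner_ip /realify /vmulI /=; ring.
Qed.

Lemma sq_int_fin_proj n (e : 'I_n -> vec) u : orthonormal_fam e -> sq_int u ->
  sq_int (fin_proj e u).
Proof.
move=> /orthonormal_realify[sf _] su; rewrite fin_proj_realify.
by apply: sq_int_sum => p _; exact: sq_int_scale.
Qed.

Lemma ip_fin_proj_le n (e : 'I_n -> vec) u : orthonormal_fam e -> sq_int u ->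
  ip (fin_proj e u) (fin_proj e u) <= ip u u.
Proof.
move=> /orthonormal_realify[sf onf] su; rewrite fin_proj_realify.
exact: ip_orth_proj_le.
Qed.

Lemma ip_fin_proj_le_ae n (e : 'I_n -> vec) x y :
  orthonormal_fam e -> sq_int x -> sq_int y -> ae_eqv (fin_proj e y) (fin_proj e x) ->
  ip (fin_proj e x) (fin_proj e x) <= ip y y.
Proof.
move=> one sx sy yx.
by rewrite -(ip_self_ae (sq_int_fin_proj one sy) (sq_int_fin_proj one sx) yx) ip_fin_proj_le.
Qed.

Lemma fin_proj_dim0 n (e : 'I_n -> vec) u k : n = 0%N -> fin_proj e u k = (0, 0).
Proof. by case: n e => // e _; rewrite /fin_proj !big_ord0. Qed.

End SquareIntegrable.

Section MomentumShells.
Variable R : realType.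
Local Notation vec := (vec R).
Implicit Types (v x : vec) (r : R).

Lemma measurable_absk : measurable_fun setT (@absk R).
Proof.
apply: measurableT_comp; first exact: continuous_measurable_fun (@sqrt_continuous R).
apply: measurable_funD; first apply: measurable_funD; apply: measurable_funX.
- by apply: measurableT_comp; exact: measurable_fst.
- by apply: measurableT_comp; [exact: measurable_snd|exact: measurable_fst].
- exact: measurable_snd.
Qed.

Definition ball_ind r (k : R * R * R) : R := (absk k < r)%R%:R.

Lemma measurable_Peps r x : measurable_vec x -> measurable_vec (Peps r x).
Proof.
have mlt : measurable_fun setT (fun k => absk k < r).
  by apply: measurable_fun_ltr; [exact: measurable_absk|exact: measurable_cst].
case=> x1 x2; rewrite /Peps; split.
- by under eq_fun do rewrite (fun_if fst); apply: measurable_fun_ifT => //; exact: measurable_cst.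
- by under eq_fun do rewrite (fun_if snd); apply: measurable_fun_ifT => //; exact: measurable_cst.
Qed.

Lemma measurable_Pshell (eps : nat -> R) i x : measurable_vec x -> measurable_vec (Pshell eps i x).
Proof.
move=> mx; have [[a1 a2] [b1 b2]] := (measurable_Peps (eps i.+1) mx, measurable_Peps (eps i) mx).
by split; apply: measurable_funB.
Qed.

Lemma Pshell_cmodsq (eps : nat -> R) i x k : eps i.+1 < eps i ->
  cmodsq (Pshell eps i x k) = (ball_ind (eps i) k - ball_ind (eps i.+1) k) * cmodsq (x k).
Proof.
move=> lt_eps; rewrite /Pshell /Peps /ball_ind.
case: ltP => [lt1|le1]; case: ltP => [lt0|le0]; rewrite /cmodsq /=; try ring.
by have := lt_le_trans (lt_trans lt1 lt_eps) le0; rewrite ltxx.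
Qed.

Lemma sq_int_Pshell (eps : nat -> R) i x : eps i.+1 < eps i -> sq_int x ->
  sq_int (Pshell eps i x).
Proof.
move=> lt_eps sx; have mx := sq_int_measurable sx.
apply: (@sq_int_le_scale _ 1 _ x) => //; first exact: measurable_Pshell.
move=> k; rewrite Pshell_cmodsq // ler_wpM2r ?cmodsq_ge0 //.
by rewrite /ball_ind; case: (absk k < eps i); case: (absk k < eps i.+1) => /=; lra.
Qed.

Lemma sum_ip_Pshell_le (eps : nat -> R) N v :
  (forall i, (0 < i)%N -> eps i.+1 < eps i) -> sq_int v ->
  \sum_(1 <= i < N.+1) ip (Pshell eps i v) (Pshell eps i v) <= ip v v.
Proof.
move=> eps_dec sv.
have sP i : i \in index_iota 1 N.+1 -> sq_int (Pshell eps i v).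
  by rewrite mem_index_iota => /andP[i0 _]; apply: sq_int_Pshell => //; exact: eps_dec.
rewrite -lee_fin -sumEFin -(normsq_ip sv) big_seq.
under eq_bigr => i /sP si do rewrite -(normsq_ip si) -[normsq _]mul1e.
rewrite -big_seq -(integral_sum_cmodsq (c := fun=> 1) _ sP); last by move=> i _; exact: ler01.
apply: ge0_le_integral => //.
- by move=> k _; rewrite lee_fin big_seq sumr_ge0 // => i _; rewrite mul1r cmodsq_ge0.
- by apply/measurable_EFinP; exact: measurable_sum_cmodsq.
- by apply/measurable_EFinP; exact: measurable_cmodsq (sq_int_measurable sv).
move=> k _; rewrite lee_fin big_seq.
under eq_bigr => i.
  rewrite mem_index_iota => /andP[i0 _]; rewrite mul1r Pshell_cmodsq ?eps_dec //.
  over.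
rewrite -big_seq -mulr_suml ler_piMl ?cmodsq_ge0 //.
rewrite (@telescope_sumr_eq _ _ _ (fun i => - ball_ind (eps i) k)) // => [|i _]; last first.
  by rewrite opprK addrC.
by rewrite opprK addrC /ball_ind; case: (absk k < _); case: (absk k < _) => /=; lra.
Qed.

Lemma wrE r k : wr r k = if absk k < r then absk k else r.
Proof. by rewrite /wr; case: ifP => _; ring. Qed.

Lemma wr_ge0 r k : 0 <= r -> 0 <= wr r k.
Proof. by move=> r0; rewrite wrE; case: ifP => _ //; exact: sqrtr_ge0. Qed.

Lemma wr_le r k : wr r k <= r.
Proof. by rewrite wrE; case: ltP => // /ltW. Qed.

Lemma cmodsq_sqrt_wr r v k : 0 <= r -> cmodsq (sqrt_wr r v k) = wr r k * cmodsq (v k).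
Proof.
by move=> r0; rewrite /sqrt_wr /cscale /cmodsq /= !exprMn sqr_sqrtr ?wr_ge0 // mulrDr.
Qed.

Lemma measurable_sqrt_wr r v : measurable_vec v -> measurable_vec (sqrt_wr r v).
Proof.
have mwr : measurable_fun setT (wr r).
  rewrite (_ : wr r = fun k => if absk k < r then absk k else r); last first.
    by apply: funext => k; rewrite wrE.
  apply: measurable_fun_ifT; [|exact: measurable_absk|exact: measurable_cst].
  by apply: measurable_fun_ltr; [exact: measurable_absk|exact: measurable_cst].
have msqrt : measurable_fun setT (fun k => Num.sqrt (wr r k)).
  by apply: measurableT_comp mwr; exact: continuous_measurable_fun (@sqrt_continuous R).
by case=> v1 v2; split; apply: measurable_funM.
Qed.

Lemma sq_int_sqrt_wr r v : 0 <= r -> sq_int v -> sq_int (sqrt_wr r v).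
Proof.
move=> r0 sv; apply: (@sq_int_le_scale _ r _ v) => //.
  exact/measurable_sqrt_wr/sq_int_measurable.
by move=> k; rewrite cmodsq_sqrt_wr // ler_wpM2r ?cmodsq_ge0 ?wr_le.
Qed.

Lemma ip_sqrt_wr_le r v : 0 <= r -> sq_int v ->
  ip (sqrt_wr r v) (sqrt_wr r v) <= r * ip v v.
Proof.
move=> r0 sv; apply: ip_self_le_scale => //.
  exact/measurable_sqrt_wr/sq_int_measurable.
by move=> k; rewrite cmodsq_sqrt_wr // ler_wpM2r ?cmodsq_ge0 ?wr_le.
Qed.

Lemma ip_Pshell_sqrt_wr_le (eps : nat -> R) i r v :
  0 <= eps i.+1 -> eps i.+1 < eps i -> eps i <= r -> sq_int v ->
  ip (Pshell eps i (sqrt_wr r v)) (Pshell eps i (sqrt_wr r v)) <=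
  eps i * ip (Pshell eps i v) (Pshell eps i v).
Proof.
move=> eps0 lt_eps le_r sv; have epsi0 := le_trans eps0 (ltW lt_eps).
have r0 := le_trans epsi0 le_r.
apply: ip_self_le_scale => //; last first.
- move=> k; have k0 : 0 <= absk k := sqrtr_ge0 _.
  rewrite !Pshell_cmodsq // cmodsq_sqrt_wr // mulrA [X in _ <= X]mulrA.
  rewrite ler_wpM2r ?cmodsq_ge0 // wrE /ball_ind.
  by do 3 case: ltP => ?; rewrite /=; lra.
- exact: sq_int_Pshell.
by apply/measurable_Pshell/measurable_sqrt_wr; exact: sq_int_measurable.
Qed.

End MomentumShells.

Section WeightedCauchySchwarz.
Variable R : realFieldType.

Lemma sqrD_le_mul (A x L M l m : R) :
  0 <= L -> 0 <= M -> 0 <= l -> 0 <= m -> A ^+ 2 <= L * M -> x ^+ 2 <= l * m ->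
  (A + x) ^+ 2 <= (L + l) * (M + m).
Proof.
move=> L0 M0 l0 m0 hA hx.
have amgm (y P Q : R) : 0 <= P -> 0 <= Q -> y ^+ 2 <= P * Q -> 2 * y <= P + Q.
  move=> P0 Q0 hy; have := sqr_ge0 (P - Q); rewrite !expr2 in hy *; nra.
have hAx : (A * x) ^+ 2 <= (L * m) * (l * M).
  have -> : L * m * (l * M) = (L * M) * (l * m) by ring.
  by rewrite exprMn ler_pM ?sqr_ge0.
have := amgm _ _ _ (mulr_ge0 L0 m0) (mulr_ge0 l0 M0) hAx.
rewrite !expr2 in hA hx *; nra.
Qed.

Lemma sqr_add_sum_le (I : eqType) (s : seq I) (a : R) (x lam m : I -> R) :
  {in s, forall i, 0 <= lam i} -> {in s, forall i, 0 <= m i} ->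
  {in s, forall i, x i ^+ 2 <= lam i * m i} ->
  (a + \sum_(i <- s) x i) ^+ 2 <= (1 + \sum_(i <- s) lam i) * (a ^+ 2 + \sum_(i <- s) m i).
Proof.
elim: s => [|j s IH] lam0 m0 xle; first by rewrite !big_nil !addr0 mul1r.
have tail P : {in j :: s, forall i, P i} -> {in s, forall i, P i}.
  by move=> hP i si; apply: hP; rewrite inE si orbT.
have L0 : 0 <= 1 + \sum_(i <- s) lam i.
  by rewrite addr_ge0 // big_seq sumr_ge0 // => i /(tail _ lam0).
have M0 : 0 <= a ^+ 2 + \sum_(i <- s) m i.
  by rewrite addr_ge0 ?sqr_ge0 // big_seq sumr_ge0 // => i /(tail _ m0).
have := sqrD_le_mul L0 M0 (lam0 _ (mem_head j s)) (m0 _ (mem_head j s))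
  (IH (tail _ lam0) (tail _ m0) (tail _ xle)) (xle _ (mem_head j s)).
by rewrite !big_cons; congr (_ ^+ 2 <= _); ring.
Qed.

Lemma sqr_coef_le (eps b y : R) (n : nat) : 0 < eps -> 0 < b < 1 -> (0 < n)%N ->
  ((b^-1 - 1) * y) ^+ 2 <= (eps / b ^+ 2 * n%:R) * (y ^+ 2 / eps).
Proof.
move=> eps0 /andP[b0 b1] n0.
have -> : eps / b ^+ 2 * n%:R * (y ^+ 2 / eps) = n%:R * (b^-1 * y) ^+ 2.
  by field; rewrite !gt_eqF.
have Binv : 1 < b^-1 by rewrite invf_gt1.
have n1 : 1 <= n%:R :> R by rewrite ler1n.
rewrite !exprMn; have := sqr_ge0 y; move: (b^-1) Binv => B B1 y0.
rewrite !expr2 in y0 *; nra.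
Qed.

End WeightedCauchySchwarz.

Section T2Bound.
Variable R : realType.
Variables (eps b : nat -> R) (n : nat -> nat) (e : forall i, 'I_(n i) -> vec R).
(* Otherwise [Set Implicit Arguments] makes the index [i] of [e] implicit. *)
Arguments e : clear implicits.
Hypothesis eps_gt0 : forall i, (0 < i)%N -> 0 < eps i.
Hypothesis eps_dec : forall i, (0 < i)%N -> eps i.+1 < eps i.
Hypothesis e_orth : forall i, (0 < i)%N -> orthonormal_fam (e i).
Hypothesis Q_shell : forall i, (0 < i)%N -> forall v, sq_int v ->
  ae_eqv (fin_proj (e i) (Pshell eps i v)) (fin_proj (e i) v).
Hypothesis b_01 : forall i, (0 < i)%N -> 0 < b i < 1.

Definition weight i := eps i / b i ^+ 2 * (n i)%:R.

Lemma weight_ge0 i : (0 < i)%N -> 0 <= weight i.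
Proof.
move=> i0; rewrite /weight mulr_ge0 // divr_ge0 ?sqr_ge0 //.
exact/ltW/eps_gt0.
Qed.

Lemma cmodsq_T2N_le N w k :
  cmodsq (T2N b e N w k) <= (1 + \sum_(1 <= i < N.+1) weight i) *
    (cmodsq (w k) + \sum_(1 <= i < N.+1) cmodsq (fin_proj (e i) w k) / eps i).
Proof.
set s := index_iota 1 N.+1.
have s_pos i : i \in s -> (0 < i)%N by rewrite mem_index_iota => /andP[].
have w0 : {in s, forall i, 0 <= weight i} by move=> i /s_pos; exact: weight_ge0.
have m0 y : {in s, forall i, 0 <= y i ^+ 2 / eps i}.
  by move=> i /s_pos i0; rewrite divr_ge0 ?sqr_ge0 // ltW ?eps_gt0.
have coef (y : nat -> R) : (forall i, n i = 0%N -> y i = 0) ->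
    {in s, forall i, (((b i)^-1 - 1) * y i) ^+ 2 <= weight i * (y i ^+ 2 / eps i)}.
  move=> y0 i /s_pos i0; have [ni0|ni_gt0] := posnP (n i).
    by rewrite y0 // !(mulr0, mul0r, expr2).
  by apply: sqr_coef_le; [exact: eps_gt0|exact: b_01|].
have q0 i : n i = 0%N -> fin_proj (e i) w k = (0, 0) by exact: fin_proj_dim0.
have c1 := sqr_add_sum_le (w k).1 w0 (m0 _)
  (coef (fun i => (fin_proj (e i) w k).1) (fun i ni0 => congr1 fst (q0 i ni0))).
have c2 := sqr_add_sum_le (w k).2 w0 (m0 _)
  (coef (fun i => (fin_proj (e i) w k).2) (fun i ni0 => congr1 snd (q0 i ni0))).
rewrite /T2N /cmodsq /= -/s.
have -> : \sum_(i <- s) ((fin_proj (e i) w k).1 ^+ 2 + (fin_proj (e i) w k).2 ^+ 2) / eps i =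
    \sum_(i <- s) (fin_proj (e i) w k).1 ^+ 2 / eps i +
    \sum_(i <- s) (fin_proj (e i) w k).2 ^+ 2 / eps i.
  by rewrite -big_split; apply: eq_bigr => i _; rewrite mulrDl.
by rewrite addrACA mulrDr lerD.
Qed.

Lemma sq_int_T2N N w : sq_int w -> sq_int (T2N b e N w).
Proof.
move=> sw; rewrite -[T2N _ _ _ _]/(vadd w (vsum (index_iota 1 N.+1)
  (fun i => vscale ((b i)^-1 - 1) (fin_proj (e i) w)))).
apply: sq_int_add => //; apply: sq_int_sum => i.
rewrite mem_index_iota => /andP[i0 _].
by apply/sq_int_scale/sq_int_fin_proj => //; exact: e_orth.
Qed.

Lemma eps_le1 i : (0 < i)%N -> eps i <= eps 1.
Proof.
case: i => // i _; elim: i => // i IH.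
exact: le_trans (ltW (eps_dec _)) IH.
Qed.

Lemma ip_fin_proj_sqrt_wr_le i v : (0 < i)%N -> sq_int v ->
  ip (fin_proj (e i) (sqrt_wr (eps 1) v)) (fin_proj (e i) (sqrt_wr (eps 1) v)) <=
  eps i * ip (Pshell eps i v) (Pshell eps i v).
Proof.
move=> i0 sv; have sw : sq_int (sqrt_wr (eps 1) v).
  by apply: sq_int_sqrt_wr => //; exact/ltW/eps_gt0.
have ei1 := eps_dec i0.
apply: le_trans (ip_Pshell_sqrt_wr_le (ltW (eps_gt0 (ltn0Sn i))) ei1 (eps_le1 i0) sv).
exact: ip_fin_proj_le_ae (e_orth i0) sw (sq_int_Pshell ei1 sw) (Q_shell i0 sw).
Qed.

Lemma ip_T2N_sqrt_wr_le N v : sq_int v ->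
  ip (T2N b e N (sqrt_wr (eps 1) v)) (T2N b e N (sqrt_wr (eps 1) v)) <=
  (1 + \sum_(1 <= i < N.+1) weight i) * (eps 1 + 1) * ip v v.
Proof.
move=> sv; set w := sqrt_wr (eps 1) v; set s := index_iota 1 N.+1; set L := 1 + _.
have e10 : 0 < eps 1 := eps_gt0 (ltn0Sn 0).
have sw : sq_int w := sq_int_sqrt_wr (ltW e10) sv.
have s_pos i : i \in s -> (0 < i)%N by rewrite mem_index_iota => /andP[].
have L0 : 0 <= L by rewrite addr_ge0 // big_seq sumr_ge0 // => i /s_pos /weight_ge0.
pose c o := if o is Some i then L / eps i else L.
pose u o := if o is Some i then fin_proj (e i) w else w.
have : ip (T2N b e N w) (T2N b e N w) <=
    \sum_(o <- None :: map Some s) c o * ip (u o) (u o).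
  apply: ip_self_le_sum.
  - exact/sq_int_measurable/sq_int_T2N.
  - move=> [i|] //; rewrite inE /= (mem_map (@Some_inj _)) => /s_pos i0.
    by rewrite divr_ge0 // ltW ?eps_gt0.
  - move=> [i|] //; rewrite inE /= (mem_map (@Some_inj _)) => /s_pos i0.
    exact: sq_int_fin_proj (e_orth i0) sw.
  - move=> k; rewrite big_cons big_map; apply: le_trans (cmodsq_T2N_le N w k) _.
    rewrite mulrDr mulr_sumr lerD // ler_sum // => i _.
    by rewrite /= [leRHS]mulrAC -mulrA.
rewrite big_cons big_map /= => /le_trans; apply.
have Qle : \sum_(i <- s) L / eps i * ip (fin_proj (e i) w) (fin_proj (e i) w) <=
    L * \sum_(i <- s) ip (Pshell eps i v) (Pshell eps i v).
  rewrite mulr_sumr big_seq [leRHS]big_seq; apply: ler_sum => i /s_pos i0.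
  rewrite -mulrA ler_wpM2l // ler_pdivrMl ?eps_gt0 //.
  exact: ip_fin_proj_sqrt_wr_le.
apply: le_trans (lerD (ler_wpM2l L0 (ip_sqrt_wr_le (ltW e10) sv))
  (le_trans Qle (ler_wpM2l L0 (sum_ip_Pshell_le N eps_dec sv)))) _.
by rewrite -mulrDr -mulrA [(_ + 1) * _]mulrDl mul1r.
Qed.

End T2Bound.

Lemma sum_le_fine_nneseries (R : realType) (u : nat -> R) m N :
  (forall i, (m <= i)%N -> 0 <= u i) -> (\sum_(m <= i <oo) (u i)%:E < +oo)%E ->
  \sum_(m <= i < N) u i <= fine (\sum_(m <= i <oo) (u i)%:E).
Proof.
move=> u0 fin; rewrite -lee_fin fineK; last first.
  by rewrite ge0_fin_numE // nneseries_ge0 // => i mi _; rewrite lee_fin u0.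
by rewrite -sumEFin; apply: nneseries_lim_ge => i mi _; rewrite lee_fin u0.
Qed.

Theorem lemma5p4 (R : realType) (eps b : nat -> R) (n : nat -> nat)
  (e : forall i : nat, 'I_(n i) -> vec R) :
  (forall i, (0 < i)%N -> 0 < eps i) ->
  (forall i, (0 < i)%N -> eps i.+1 < eps i) ->
  eps @ \oo --> 0 ->
  (forall i, (0 < i)%N -> orthonormal_fam (e i)) ->
  (forall i, (0 < i)%N -> forall v : vec R, sq_int v ->
     ae_eqv (fin_proj (e i) (Gamma v)) (Gamma (fin_proj (e i) v))) ->
  (forall i, (0 < i)%N -> forall v : vec R, sq_int v ->
     ae_eqv (fin_proj (e i) (Pshell eps i v)) (fin_proj (e i) v)) ->
  (forall i, (0 < i)%N -> 0 < b i < 1) ->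
  b @ \oo --> 0 ->
  (\sum_(1 <= i <oo) ((eps i / b i ^+ 2 * (n i)%:R)%:E) < +oo)%E ->
  exists C : R, forall v : vec R, D0 v ->
    \forall N \near \oo,
      (normsq (T2N b e N (sqrt_wr (eps 1%N) v)) <= C%:E * normsq v)%E.
Proof.
move=> eps_gt0 eps_dec _ e_orth _ Q_shell b_01 _ fin_weights.
exists ((1 + fine (\sum_(1 <= i <oo) (weight eps b n i)%:E)) * (eps 1 + 1)).
move=> v [sv _]; apply: nearW => N.
have sw := sq_int_sqrt_wr (ltW (eps_gt0 1 isT)) sv.
rewrite (normsq_ip (sq_int_T2N b e_orth N sw)) (normsq_ip sv) -EFinM lee_fin.
apply: le_trans (ip_T2N_sqrt_wr_le eps_gt0 eps_dec e_orth Q_shell b_01 N sv) _.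
apply: ler_wpM2r; first exact: ip_self_ge0.
apply: ler_wpM2r; first by rewrite addr_ge0 // ltW ?eps_gt0.
by rewrite lerD2l; exact: sum_le_fine_nneseries (weight_ge0 b n eps_gt0) fin_weights.
Qed.
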